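(* Let $K,L,T$ be positive integers with $L\le K$, let $\varphi=T-1-KL+2K$, and for $r\in\{1,\ldots,\min\{K,T\}\}$ let $N(r)$ be the number of distinct integers in $\operatorname{Set}(\alpha)+\operatorname{Set}(\beta)$ for the $\mathsf{GASP}_r$ vectors $(\alpha,\beta)$. Suppose $\varphi\ge1$. Then for every integer $r$ with $1\le r\le\min\{K,T,\varphi\}$ we have $N(\min\{K,T,\varphi\})\le N(r)$.
   Context: The code $\mathsf{GASP}_r$ ($L\le K$, $1\le r\le\min\{K,T\}$) consists of $\alpha=(\alpha_{\mathrm p}\mid\alpha_{\mathrm s})$, $\beta=(\beta_{\mathrm p}\mid\beta_{\mathrm s})$ with $\alpha_{\mathrm p}=(0,1,\ldots,K-1)$; $\alpha_{\mathrm s}$ the $T$ smallest elements of $\{KL+j+Kt: 0\le j\le r-1,\ t\in\mathbb{Z}_{\ge0}\}$ in increasing order; $\beta_{\mathrm p}=(0,K,\ldots,K(L-1))$; $\beta_{\mathrm s}=(KL,\ldots,KL+T-1)$. $\operatorname{Set}(v)$ is the set of entries of $v$, $A+B=\{a+b\}$. *)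

From mathcomp Require Import all_boot.

Definition alpha_p (K : nat) : seq nat := iota 0 K.

(* membership in {KL + j + K t : 0 <= j <= r-1, t >= 0} *)
Definition in_alpha_s_set (K L r n : nat) : bool :=
  (K * L <= n) && ((n - K * L) %% K < r).

(* the T smallest elements of that set, in increasing order.  All of them lie
   in [KL, KL + KT) since j = 0, t = 0..T-1 already gives T elements there. *)
Definition alpha_s (K L T r : nat) : seq nat :=
  take T [seq n <- iota (K * L) (K * T) | in_alpha_s_set K L r n].

Definition alpha (K L T r : nat) : seq nat := alpha_p K ++ alpha_s K L T r.

Definition beta_p (K L : nat) : seq nat := [seq K * i | i <- iota 0 L].
Definition beta_s (K L T : nat) : seq nat := iota (K * L) T.
Definition beta (K L T : nat) : seq nat := beta_p K L ++ beta_s K L T.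

Definition N_GASP (K L T r : nat) : nat :=
  size (undup [seq a + b | a <- alpha K L T r, b <- beta K L T]).

(* Raising r to r + 1 removes the largest elements of Set(alpha_s) (the
   dropped ones) and adds as many new ones, all of residue r mod K; let common
   be alpha_p together with the secondary exponents shared by both codes.  A
   sum c + b with c new and b < max beta already lies in common + beta: move
   one unit from c to b or, when b = K i is primary, move multiples of K from c
   into b and, using r < phi, the rest into alpha_p.  So the new sumset lies in
   (new + max beta) u (common + beta), while the old one contains the disjoint
   union of (dropped + max beta) and (common + beta), since every dropped
   exponent exceeds all common ones.  Hence N(r + 1) <= N(r) for
   r < min {K, T, phi}. *)
From mathcomp Require Import all_boot zify.

Local Notation sumset A B := [seq a + b | a <- A, b <- B].

Section SeqFacts.
Context {T : eqType}.
Implicit Types s t : seq T.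

Lemma count_notin_sym s t :
  uniq s -> uniq t -> size s = size t -> count [predC s] t = count [predC t] s.
Proof.
move=> s_uniq t_uniq eq_size.
have count_mem_sym : count [in s] t = count [in t] s.
  rewrite -!size_filter; apply/perm_size/uniq_perm; rewrite ?filter_uniq //.
  by move=> x; rewrite !mem_filter andbC.
by have := count_predC [in s] t; have := count_predC [in t] s; lia.
Qed.

Lemma size_undup_leq {s t} :
  {subset s <= t} -> size (undup s) <= size (undup t).
Proof.
move=> sub_st; apply: uniq_leq_size (undup_uniq s) _ => x.
by rewrite !mem_undup => /sub_st.
Qed.

Lemma size_undup_cat_leq s t :
  size (undup (s ++ t)) <= size s + size (undup t).
Proof.
rewrite undup_cat size_cat leq_add2r size_filter.
exact: leq_trans (count_size _ _) (size_undup s).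
Qed.

End SeqFacts.

Lemma mem_take_filter_iota (p : pred nat) T m n x :
  (x \in take T [seq y <- iota m n | p y]) =
  [&& m <= x, x < m + n, p x & count p (iota m (x - m)) < T].
Proof.
have [/andP[m_le_x x_lt]|x_out] := boolP ((m <= x) && (x < m + n)); last first.
  rewrite andbA (negbTE x_out); apply/negbTE/negP.
  move=> /mem_take; rewrite mem_filter mem_iota => /andP[_ x_in].
  by case/negP: x_out.
rewrite m_le_x x_lt /=.
have -> : n = (x - m) + (n - (x - m)).-1.+1 by lia.
rewrite iotaD (subnKC m_le_x) filter_cat /= -size_filter.
set below := [seq y <- iota m (x - m) | p y].
have x_notin_below : x \notin below.
  by rewrite mem_filter mem_iota (subnKC m_le_x) ltnn !andbF.
have x_notin_above : x \notin [seq y <- iota x.+1 (n - (x - m)).-1 | p y].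
  by rewrite mem_filter mem_iota ltnn andbF.
rewrite take_cat; case: ltnP => [T_lt|T_ge].
  rewrite ltnNge (ltnW T_lt) andbF.
  by apply/negbTE/negP => /mem_take; apply/negP.
rewrite mem_cat (negbTE x_notin_below) /=.
case px: (p x) => /=; last first.
  by apply/negbTE/negP => /mem_take; apply/negP.
case T_gap: (T - size below) => [|k] /=; first by rewrite in_nil; lia.
by rewrite in_cons eqxx; lia.
Qed.

Lemma mem_beta K L T b :
  (b \in beta K L T) = (b \in beta_p K L) || (K * L <= b < K * L + T).
Proof. by rewrite mem_cat mem_iota. Qed.

Lemma in_alpha_s_setS {K L r x} :
  in_alpha_s_set K L r x -> in_alpha_s_set K L r.+1 x.
Proof. by rewrite /in_alpha_s_set => /andP[-> /ltnW]. Qed.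

Section AlphaS.
Variables K L : nat.

Definition alpha_s_rank r x :=
  count (in_alpha_s_set K L r) (iota (K * L) (x - K * L)).

Lemma in_alpha_s_set_residue r t j :
  j < r -> j < K -> in_alpha_s_set K L r (K * L + t * K + j).
Proof.
move=> j_lt_r j_lt_K.
by rewrite /in_alpha_s_set -addnA leq_addr addKn modnMDl modn_small.
Qed.

Lemma alpha_s_rank_leq r : {homo alpha_s_rank r : x y / x <= y}.
Proof.
move=> x y x_le_y; rewrite /alpha_s_rank.
have -> : y - K * L = (x - K * L) + (y - K * L - (x - K * L)) by lia.
by rewrite iotaD count_cat leq_addr.
Qed.

Lemma alpha_s_rankS r x : alpha_s_rank r x <= alpha_s_rank r.+1 x.
Proof. by apply: sub_count => y; apply: in_alpha_s_setS. Qed.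

Lemma mem_alpha_s T r x : (x \in alpha_s K L T r) =
  [&& K * L <= x, x < K * L + K * T, in_alpha_s_set K L r x
    & alpha_s_rank r x < T].
Proof. exact: mem_take_filter_iota. Qed.

Lemma uniq_alpha_s T r : uniq (alpha_s K L T r).
Proof. exact/take_uniq/filter_uniq/iota_uniq. Qed.

(* Each of the T blocks [KL + K t, KL + K (t + 1)) contains KL + K t. *)
Lemma size_alpha_s T r : 0 < K -> 0 < r -> size (alpha_s K L T r) = T.
Proof.
move=> K_gt0 r_gt0; rewrite size_take size_filter.
suff : T <= count (in_alpha_s_set K L r) (iota (K * L) (K * T)).
  by case: ltnP => // ? ?; apply/eqP; rewrite eqn_leq; apply/andP.
elim: T => [//|T IH]; rewrite mulnS addnC iotaD count_cat.
suff : 0 < count (in_alpha_s_set K L r) (iota (K * L + K * T) K) by lia.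
rewrite -has_count; apply/hasP; exists (K * L + K * T).
  by rewrite mem_iota leqnn /=; lia.
by rewrite /in_alpha_s_set leq_addr addKn modnMr.
Qed.

End AlphaS.

Section Step.
Variables K L T r : nat.
Hypotheses (K_gt0 : 0 < K) (L_gt0 : 0 < L) (r_gt0 : 0 < r).
Hypotheses (r_lt_K : r < K) (r_lt_T : r < T).
Hypothesis r_lt_phi : K * L + r + 2 <= T + 2 * K.

Local Notation s0 := (alpha_s K L T r).
Local Notation s1 := (alpha_s K L T r.+1).
Local Notation B := (beta K L T).
Local Notation top := (K * L + T - 1).
Local Notation common := (alpha_p K ++ [seq a <- s0 | a \in s1]).
Local Notation new := [seq c <- s1 | c \notin s0].
Local Notation dropped := [seq y <- s0 | y \notin s1].

Lemma beta_le_top {b} : b \in B -> b <= top.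
Proof.
rewrite mem_beta => /orP[/mapP[i]|]; last by lia.
rewrite mem_iota => /andP[_ i_lt] ->.
have : K * i < K * L by rewrite ltn_pmul2l.
lia.
Qed.

Lemma alpha_sS_mem {x} : x \in s1 -> in_alpha_s_set K L r x -> x \in s0.
Proof.
rewrite !mem_alpha_s => /and4P[-> -> _ rank_lt] x_in /=; rewrite x_in /=.
exact: leq_ltn_trans (alpha_s_rankS _ _ _ _) rank_lt.
Qed.

Lemma dropped_gt {y z} : y \in s0 -> y \notin s1 -> z \in s1 -> z < y.
Proof.
rewrite !mem_alpha_s => /and4P[-> -> y_in _] /=.
rewrite (in_alpha_s_setS y_in) /= -leqNgt => rank_ge /and4P[_ _ _ rank_lt].
rewrite ltnNge; apply/negP => /(alpha_s_rank_leq K L r.+1); lia.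
Qed.

Lemma common_below {c z} :
  c \in s1 -> K * L <= z <= c -> in_alpha_s_set K L r z -> z \in common.
Proof.
move=> c_in /andP[KL_le_z z_le_c] z_in.
have z_in1 : z \in s1.
  move: c_in; rewrite !mem_alpha_s => /and4P[_ c_lt _ rank_lt].
  rewrite KL_le_z (in_alpha_s_setS z_in) /=; apply/andP; split; first lia.
  exact: leq_ltn_trans (@alpha_s_rank_leq K L r.+1 _ _ z_le_c) rank_lt.
by rewrite mem_cat mem_filter z_in1 alpha_sS_mem ?orbT.
Qed.

Lemma new_residue {c} :
  c \in s1 -> c \notin s0 -> exists t, c = K * L + t * K + r.
Proof.
move=> c_in1 c_notin0.
have /andP[KL_le_c res_le] : in_alpha_s_set K L r.+1 c.
  by move: c_in1; rewrite mem_alpha_s => /and4P[].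
have res_eq : (c - K * L) %% K = r.
  apply/eqP; rewrite eqn_leq -ltnS res_le /= leqNgt; apply/negP => res_lt.
  by case/negP: c_notin0; apply: alpha_sS_mem; rewrite /in_alpha_s_set ?KL_le_c.
exists ((c - K * L) %/ K); have := divn_eq (c - K * L) K; lia.
Qed.

Section NewSum.
Context {c t : nat}.
Hypotheses (c_in : c \in s1) (c_eq : c = K * L + t * K + r).

Lemma new_add_beta_s b :
  K * L <= b < top -> c + b \in sumset common B.
Proof.
move=> b_range; have -> : c + b = (c - 1) + (b + 1) by lia.
apply: allpairs_f; last by rewrite mem_beta; lia.
apply: (common_below c_in); first lia.
have -> : c - 1 = K * L + t * K + (r - 1) by lia.
by apply: in_alpha_s_set_residue; lia.
Qed.

(* If t + i >= L, trade L multiples of K for the secondary exponent KL + 1 of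
   beta; otherwise r < phi lets the excess over KL + T - 1 fit into alpha_p. *)
Lemma new_add_beta_p i : i < L -> c + K * i \in sumset common B.
Proof.
move=> i_lt_L; have [L_le|lt_L] := leqP L (t + i).
  have shift : (t + i - L) * K + K * L = t * K + K * i.
    by rewrite (mulnC K L) (mulnC K i) -mulnDl subnK // mulnDl.
  have le_tK : (t + i - L) * K <= t * K by apply: leq_mul; lia.
  have -> : c + K * i = (K * L + (t + i - L) * K + (r - 1)) + (K * L + 1).
    by lia.
  apply: allpairs_f; last by rewrite mem_beta; lia.
  by apply: (common_below c_in); [lia | apply: in_alpha_s_set_residue; lia].
have K_le_KL : K <= K * L by rewrite leq_pmulr.
have tiK : (t + i) * K = t * K + K * i by rewrite mulnDl (mulnC i K).
have le_KL : (t + i) * K <= (L - 1) * K by apply: leq_mul; lia.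
rewrite mulnBl mul1n (mulnC L K) in le_KL.
have -> : c + K * i = (c + K * i - top) + minn (c + K * i) top by lia.
apply: allpairs_f; last by rewrite mem_beta; lia.
by rewrite mem_cat mem_iota; lia.
Qed.

End NewSum.

Lemma sumset_alphaS_sub :
  {subset sumset (alpha K L T r.+1) B <=
          [seq c + top | c <- new] ++ sumset common B}.
Proof.
move=> _ /allpairsP[[a b] [/= a_in b_in ->]].
have in_common a' : a' \in common -> a' + b \in sumset common B.
  by move=> a'_in; apply: allpairs_f.
rewrite mem_cat; apply/orP; move: a_in; rewrite mem_cat => /orP[a_in|a_in1].
  by right; apply: in_common; rewrite mem_cat a_in.
have [a_in0|a_notin0] := boolP (a \in s0).
  by right; apply: in_common; rewrite mem_cat mem_filter a_in0 a_in1 orbT.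
have [t a_eq] := new_residue a_in1 a_notin0.
have [->|b_ne] := eqVneq b top.
  by left; apply: map_f; rewrite mem_filter a_notin0.
right; move: b_in; rewrite mem_beta => /orP[/mapP[i]|b_range].
  rewrite mem_iota => /andP[_ i_lt] ->.
  exact: new_add_beta_p a_in1 a_eq _ i_lt.
by apply: (new_add_beta_s a_in1 a_eq); lia.
Qed.

Lemma dropped_sums_uniq :
  uniq ([seq y + top | y <- dropped] ++ undup (sumset common B)).
Proof.
rewrite cat_uniq undup_uniq andbT (map_inj_uniq (@addIn _)).
rewrite filter_uniq ?uniq_alpha_s //=.
apply/hasPn => _ /[!mem_undup] /allpairsP[[a b] [/= a_in b_in ->]].
apply/negP => /mapP[y]; rewrite mem_filter => /andP[y_notin1 y_in0].
have KL_le_y : K * L <= y by move: y_in0; rewrite mem_alpha_s => /and4P[].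
have a_lt_y : a < y.
  have K_le_KL : K <= K * L by rewrite leq_pmulr.
  move: a_in; rewrite mem_cat mem_iota => /orP[a_lt|]; first lia.
  rewrite mem_filter => /andP[a_in1 _].
  exact: dropped_gt y_in0 y_notin1 a_in1.
by have := beta_le_top b_in; lia.
Qed.

Lemma dropped_sums_sub :
  {subset [seq y + top | y <- dropped] ++ undup (sumset common B) <=
          sumset (alpha K L T r) B}.
Proof.
move=> x; rewrite mem_cat mem_undup.
case/orP=> [/mapP[y]|/allpairsP[[a b] [/= a_in b_in ->]]].
  rewrite mem_filter => /andP[_ y_in0] ->.
  by apply: allpairs_f; rewrite ?mem_cat ?y_in0 ?orbT // mem_iota; lia.
apply: allpairs_f b_in; move: a_in; rewrite !mem_cat => /orP[-> //|].
by rewrite mem_filter => /andP[_ ->]; rewrite orbT.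
Qed.

Lemma size_new_dropped : size new = size dropped.
Proof.
rewrite !size_filter; apply: count_notin_sym; rewrite ?uniq_alpha_s //.
by rewrite !size_alpha_s.
Qed.

Lemma N_GASP_S_leq : N_GASP K L T r.+1 <= N_GASP K L T r.
Proof.
rewrite /N_GASP.
have upper : size (undup (sumset (alpha K L T r.+1) B)) <=
             size new + size (undup (sumset common B)).
  apply: leq_trans (size_undup_leq sumset_alphaS_sub) _.
  by rewrite -(size_map (fun c => c + top) new) size_undup_cat_leq.
have lower : size dropped + size (undup (sumset common B)) <=
             size (undup (sumset (alpha K L T r) B)).
  rewrite -(size_map (fun y => y + top) dropped) -size_cat.
  apply: uniq_leq_size dropped_sums_uniq _ => x /dropped_sums_sub.
  by rewrite mem_undup.
by rewrite size_new_dropped in upper; exact: leq_trans upper lower.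
Qed.

End Step.

Theorem lemma2 (K L T : nat) :
  0 < K -> 0 < L -> 0 < T -> L <= K ->
  (* phi = T - 1 - K L + 2 K >= 1, i.e. T + 2K >= KL + 2; then phi = T + 2K - 1 - KL in nat *)
  K * L + 2 <= T + 2 * K ->
  forall r : nat, 1 <= r -> r <= minn K (minn T (T + 2 * K - 1 - K * L)) ->
    N_GASP K L T (minn K (minn T (T + 2 * K - 1 - K * L))) <= N_GASP K L T r.
Proof.
move=> K_gt0 L_gt0 _ _ _ r r_gt0 r_le.
set m := minn K _ in r_le *.
pose range := [pred k | 0 < k <= m].
have range_convex : {in range &, forall i j k, i < k < j -> k \in range}.
  by move=> i j /andP[? ?] /andP[? ?] k /andP[? ?]; apply/andP; lia.
have step : {in range, forall k,
  k.+1 \in range -> N_GASP K L T k.+1 <= N_GASP K L T k}.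
  move=> k /andP[k_gt0 _] /andP[_ k_lt].
  by apply: N_GASP_S_leq => //; rewrite /m in k_lt; lia.
have N_nonincreasing := homo_leq_in (f := N_GASP K L T) (r := fun x y => y <= x)
  leqnn (fun _ _ _ le1 le2 => leq_trans le2 le1) range_convex step.
have r_in : r \in range by rewrite inE r_gt0 r_le.
have m_in : m \in range by rewrite inE (leq_trans r_gt0 r_le) leqnn.
exact: N_nonincreasing r_in m_in r_le.
Qed.
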